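(* Let $W$ be an eventually periodic subset of $\mathbb{Z}^d$ with periods $u_1,\dots,u_d$, and let $\mathscr{W}_1,\mathcal{W}$ be as defined in the context. Suppose $\mathscr{W}_1\neq\emptyset$ and there exists a nonempty finite subset $\mathcal{M}\subseteq\mathbb{Z}^d$ such that: (1) $\pi$ restricted to $\mathcal{M}$ is injective; (2) $\pi(\mathcal{M}+(\mathcal{W}\cup\mathscr{W}_1))=\mathbb{Z}^d/\mathcal{L}$; (3) for every $m\in\mathcal{M}$ there exists $w\in\mathscr{W}_1$ such that $m+w\not\equiv m'+w'\pmod{\mathcal{L}}$ for all $m'\in\mathcal{M}\setminus\{m\}$ and all $w'\in\mathcal{W}\cup\mathscr{W}_1$. Then $W$ has a minimal complement in $\mathbb{Z}^d$.
   Context: $d\geqslant1$, $\mathbb{N}=\{0,1,2,\dots\}$. Let $u_1,\dots,u_d\in\mathbb{Z}^d$ satisfy no nontrivial $\mathbb{Z}$-linear relation, $\mathcal{L}=\mathbb{Z}u_1+\dots+\mathbb{Z}u_d$, $P=\mathbb{N}u_1+\dots+\mathbb{N}u_d$, $\pi:\mathbb{Z}^d\to\mathbb{Z}^d/\mathcal{L}$ the quotient map. A nonempty $X\subseteq\mathbb{Z}^d$ is eventually periodic with periods $u_1,\dots,u_d$ if $X\subseteq F+P$ for some nonempty finite $F\subseteq\mathbb{Z}^d$ and $x+P\subseteq X$ for all but finitely many $x\in X$. For such $W$: $\mathscr{W}=\{w\in W:w+P\not\subseteq W\}$; $\mathcal{W}=\{w\in W\setminus\mathscr{W}:(w-P)\cap(W\setminus\mathscr{W})=\{w\}\}$;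 $\mathscr{W}_1$ is the set of elements of $\mathscr{W}$ congruent modulo $\mathcal{L}$ to no element of $\mathcal{W}$. A nonempty $M\subseteq\mathbb{Z}^d$ is a complement of $W$ if $M+W=\mathbb{Z}^d$, and a minimal complement if no proper subset of $M$ is a complement of $W$. *)

(* Z^d is modelled as 'rV[int]_d; subsets of Z^d as predicates
   'rV[int]_d -> Prop; finite subsets as explicit seqs. *)
From mathcomp Require Import all_boot all_order all_algebra.
Set Implicit Arguments. Unset Strict Implicit. Unset Printing Implicit Defensive.
Import Order.TTheory GRing.Theory Num.Theory.
Local Open Scope ring_scope.

Definition vec (d : nat) := 'rV[int]_d.

Definition Zindep d (u : 'I_d -> vec d) : Prop :=
  forall c : 'I_d -> int, \sum_(i < d) u i *~ c i = 0 -> forall i, c i = 0.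

Definition inL d (u : 'I_d -> vec d) (x : vec d) : Prop :=
  exists c : 'I_d -> int, x = \sum_(i < d) u i *~ c i.

Definition inP d (u : 'I_d -> vec d) (x : vec d) : Prop :=
  exists c : 'I_d -> nat, x = \sum_(i < d) u i *+ c i.

(* x = y mod L, i.e. pi x = pi y *)
Definition congrL d (u : 'I_d -> vec d) (x y : vec d) : Prop := inL u (x - y).

Definition finite_set d (X : vec d -> Prop) : Prop :=
  exists s : seq (vec d), forall x, X x -> x \in s.

Definition eventually_periodic d (u : 'I_d -> vec d) (X : vec d -> Prop) : Prop :=
  (exists x, X x) /\
  (exists F : seq (vec d), F != [::] /\
     forall x, X x -> exists f p, f \in F /\ inP u p /\ x = f + p) /\
  finite_set (fun x => X x /\ ~ (forall p, inP u p -> X (x + p))).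

Definition scrW d (u : 'I_d -> vec d) (W : vec d -> Prop) (w : vec d) : Prop :=
  W w /\ ~ (forall p, inP u p -> W (w + p)).

Definition calW d (u : 'I_d -> vec d) (W : vec d -> Prop) (w : vec d) : Prop :=
  (W w /\ ~ scrW u W w) /\
  forall p, inP u p -> (W (w - p) /\ ~ scrW u W (w - p)) -> w - p = w.

Definition scrW1 d (u : 'I_d -> vec d) (W : vec d -> Prop) (w : vec d) : Prop :=
  scrW u W w /\ forall w', calW u W w' -> ~ congrL u w w'.

Definition is_complement d (M W : vec d -> Prop) : Prop :=
  (exists m, M m) /\ forall z, exists m w, M m /\ W w /\ z = m + w.

Definition is_minimal_complement d (M W : vec d -> Prop) : Prop :=
  is_complement M W /\
  forall M' : vec d -> Prop,
    (forall x, M' x -> M x) -> (exists x, M x /\ ~ M' x) -> ~ is_complement M' W.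

(* Every point of W outside scrW descends along P to a point of calW, so W is
   covered modulo L by calW and scrW1.  Let s0 be the finite set scrW and fix N > |s0|
   such that distinct elements of s0 are never congruent modulo N L.  By (2) the set
   Ms + L, a finite union of cosets of N L, is a complement of W; take a minimal
   family B of such cosets whose union is still a complement.
   By (3) and pigeonhole (N > |s0|), every label m in Ms of a coset of B labels a
   second coset of B.  If M' were a smaller complement, pick x outside M' in a coset j
   of B, and z = x0 + w0 covered by no other coset.  The second coset with the label
   of j would cover z through any a in W \ scrW congruent to w0 (as a + P lies in W),
   so the L-class of w0 in W lies in s0.  Writing x + w0 = x' + w' with x' in M'
   then forces x' to lie in coset j, hence w' = w0 and x' = x. *)

From mathcomp Require Import all_boot all_order all_algebra zify ring.
From Stdlib Require Import Classical.
Import Order.TTheory GRing.Theory Num.Theory.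
Local Open Scope ring_scope.

Set Implicit Arguments. Unset Strict Implicit.

Ltac vec_ring := apply/matrixP => ? ?; rewrite !mxE; ring.

Lemma ex_bound_seq (T : eqType) (s : seq T) (P : T -> nat -> Prop) :
  (forall x, x \in s -> exists n, forall m, (n <= m)%N -> P x m) ->
  exists n, forall x, x \in s -> forall m, (n <= m)%N -> P x m.
Proof.
elim: s => [|a s IHs] Hs; first by exists 0%N.
have [na Ha] := Hs a (mem_head a s).
have [ns Hs'] := IHs (fun x xs => Hs x ltac:(by rewrite inE xs orbT)).
exists (maxn na ns) => x /predU1P [-> | xs] m; rewrite geq_max => /andP[].
  by move=> /Ha.
by move=> _ /(Hs' x xs).
Qed.

Lemma ex_minimal_set (T : finType) (p : {set T} -> Prop) (A : {set T}) :
  p A -> exists2 B, p B & forall j, j \in B -> ~ p (B :\ j).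
Proof.
move: {2}#|A| (leqnn #|A|) => n; elim: n A => [|n IHn] A le_An pA;
  (case: (classic (exists2 j, j \in A & p (A :\ j))) => [[j jA pAj] | min_A];
   last by exists A => // j jA pAj; apply: min_A; exists j).
  by move: le_An; rewrite (cardsD1 j) jA.
by apply: (IHn (A :\ j)) => //; move: le_An; rewrite (cardsD1 j) jA.
Qed.

Lemma pigeonhole_seq (T : eqType) (s : seq T) n (P : 'I_n -> T -> Prop) :
  (forall k, exists2 y, y \in s & P k y) ->
  (forall k k' y, P k y -> P k' y -> k = k') -> (n <= size s)%N.
Proof.
move=> exP uniqP.
have [f fP] : exists f : 'I_n -> T, forall k, f k \in s /\ P k (f k).
  by apply: (@fin_all_exists _ (fun=> T) (fun k y => y \in s /\ P k y)) => k;
    have [y ys Pky] := exP k; exists y.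
have f_inj : injective f.
  by move=> k k' ekk'; apply: (uniqP k k' (f k)); [|rewrite ekk']; apply: (fP _).2.
rewrite -(size_enum_ord n) -(size_map f); apply: uniq_leq_size.
  by rewrite map_inj_uniq ?enum_uniq.
by move=> _ /mapP[k _ ->]; apply: (fP k).1.
Qed.

Section Lattice.
Variables (d : nat) (u : 'I_d -> vec d).

Definition lin (c : 'I_d -> int) : vec d := \sum_(i < d) u i *~ c i.

Definition cone (c : 'I_d -> nat) : vec d := \sum_(i < d) u i *+ c i.

Definition dilate (N : nat) (i : 'I_d) : vec d := u i *+ N.

Lemma eq_lin a b : a =1 b -> lin a = lin b.
Proof. by move=> eq_ab; apply: eq_bigr => i _; rewrite eq_ab. Qed.

Lemma linD a b : lin a + lin b = lin (fun i => a i + b i).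
Proof. by rewrite -big_split; apply: eq_bigr => i _; rewrite mulrzDr. Qed.

Lemma linN a : - lin a = lin (fun i => - a i).
Proof. by rewrite -sumrN; apply: eq_bigr => i _; rewrite mulrNz. Qed.

Lemma lin0 : lin (fun=> 0) = 0.
Proof. by rewrite /lin big1 // => i _; rewrite mulr0z. Qed.

Lemma lin_delta i0 t : lin (fun i => if i == i0 then t else 0) = u i0 *~ t.
Proof.
by rewrite /lin (bigD1 i0) //= eqxx big1 ?addr0 // => i /negbTE ->; rewrite mulr0z.
Qed.

Lemma cone_lin c : cone c = lin (fun i => (c i)%:Z).
Proof. by apply: eq_bigr => i _; rewrite pmulrn. Qed.

Lemma coneD a b : cone a + cone b = cone (fun i => a i + b i)%N.
Proof. by rewrite -big_split; apply: eq_bigr => i _; rewrite mulrnDr. Qed.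

Lemma inL_lin c : inL u (lin c). Proof. by exists c. Qed.

Lemma inL0 : inL u 0. Proof. by rewrite -lin0; apply: inL_lin. Qed.

Lemma inLD x y : inL u x -> inL u y -> inL u (x + y).
Proof. by move=> [a ->] [b ->]; rewrite linD; apply: inL_lin. Qed.

Lemma inLN x : inL u x -> inL u (- x).
Proof. by move=> [a ->]; rewrite linN; apply: inL_lin. Qed.

Lemma inLB x y : inL u x -> inL u y -> inL u (x - y).
Proof. by move=> Lx Ly; apply/inLD/inLN. Qed.

Lemma inL_mulrn i k : inL u (u i *+ k).
Proof. by rewrite pmulrn -lin_delta; apply: inL_lin. Qed.

Lemma inP0 : inP u 0.
Proof. by exists (fun=> 0%N); rewrite big1 // => i _; rewrite mulr0n. Qed.

Lemma inPD x y : inP u x -> inP u y -> inP u (x + y).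
Proof. by move=> [a ->] [b ->]; exists (fun i => a i + b i)%N; apply: coneD. Qed.

Lemma inP_inL x : inP u x -> inL u x.
Proof. by move=> [c ->]; rewrite -/(cone c) cone_lin; apply: inL_lin. Qed.

Lemma lin_dilate N c : \sum_(i < d) dilate N i *~ c i = lin (fun i => N%:Z * c i).
Proof. by apply: eq_bigr => i _; rewrite mulrzA -pmulrn. Qed.

Lemma inL_dilate N x : inL (dilate N) x -> inL u x.
Proof. by move=> [c ->]; rewrite lin_dilate; apply: inL_lin. Qed.

Lemma inL_dilate_cone N v : (0 < N)%N -> inL u v ->
  exists2 q, inL (dilate N) q & inP u (v - q).
Proof.
move=> N_gt0 [c ->]; pose K := (\sum_i absz (c i))%N.
have le_cK i : (absz (c i) <= K)%N by rewrite /K (bigD1 i) //= leq_addr.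
exists (\sum_(i < d) dilate N i *~ (- K%:Z)); first by exists (fun=> - K%:Z).
exists (fun i => absz (c i + N%:Z * K%:Z)); rewrite -/(cone _) cone_lin lin_dilate linN linD.
apply: eq_lin => i; have := le_cK i; clear le_cK; clearbody K; nia.
Qed.

Hypothesis hu : Zindep u.

Lemma lin_inj a b : lin a = lin b -> a =1 b.
Proof.
move=> eq_ab i; apply/eqP; rewrite -subr_eq0; apply/eqP.
apply: (hu (c := fun i => a i - b i)).
rewrite -/(lin (fun i => a i - b i)).
have -> : lin (fun i => a i - b i) = lin a - lin b by rewrite linN linD.
by rewrite eq_ab subrr.
Qed.

Lemma cone_inj a b : cone a = cone b -> a =1 b.
Proof. by rewrite !cone_lin => /lin_inj eq_ab i; apply/eqP; rewrite -eqz_nat eq_ab. Qed.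

Lemma inL_dilate_small N c : inL (dilate N) (lin c) ->
  (forall i, (absz (c i) < N)%N) -> forall i, c i = 0.
Proof.
move=> [c' /esym]; rewrite lin_dilate => /lin_inj eq_c small i.
have := small i; rewrite -eq_c /= abszM absz_nat.
move=> lt; have /eqP : absz (c' i) = 0%N by nia.
by rewrite absz_eq0 => /eqP ->; rewrite mulr0.
Qed.

Lemma inL_dilate_mulrn_eq N i k k' : (k < N)%N -> (k' < N)%N ->
  inL (dilate N) (u i *+ k - u i *+ k') -> k = k'.
Proof.
move=> lt_kN lt_k'N; rewrite !pmulrn -mulrzBr -lin_delta => /inL_dilate_small small.
suff /(_ i) : forall j, (if j == i then k%:Z - k'%:Z else 0) = 0.
  by rewrite eqxx => /eqP; rewrite subr_eq0 eqz_nat => /eqP.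
by apply: small => j; case: eqP => _; lia.
Qed.

End Lattice.

Section Descent.
Variables (d : nat) (u : 'I_d -> vec d) (W : vec d -> Prop) (F : seq (vec d)).
Hypothesis hu : Zindep u.
Hypothesis hF : forall x, W x -> exists f p, f \in F /\ inP u p /\ x = f + p.

Lemma W_addP a p : W a -> ~ scrW u W a -> inP u p -> W (a + p).
Proof.
by move=> Wa not_scr_a Pp; apply: NNPP => not_Wap; apply: not_scr_a; split=> // /(_ p Pp).
Qed.

Definition height_le x n :=
  forall f c, f \in F -> x = f + cone u c -> (\sum_i c i <= n)%N.

Lemma ex_height_le x : exists n, height_le x n.
Proof.
have [n Hn] : exists n, forall f, f \in F -> forall m, (n <= m)%N ->
    forall c, x = f + cone u c -> (\sum_i c i <= m)%N.
  apply: ex_bound_seq => f _.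
  case: (classic (exists c, x = f + cone u c)) => [[c0 e0] | no_c]; last first.
    by exists 0%N => m _ c e; case: no_c; exists c.
  exists (\sum_i c0 i)%N => m le c e.
  have /(cone_inj hu) eq_c : cone u c0 = cone u c by apply: (addrI f); rewrite -e0 -e.
  by rewrite -(eq_bigr _ (fun i _ => eq_c i)).
by exists n => f c fF; apply: Hn.
Qed.

Lemma height_le_sub x n c :
  height_le x n -> height_le (x - cone u c) (n - \sum_i c i).
Proof.
move=> hx f c' fF e; have := hx f (fun i => c' i + c i)%N fF.
by rewrite -coneD addrA -e subrK big_split /= => /(_ erefl); lia.
Qed.

Lemma height_le_W x n c : height_le x n -> W (x - cone u c) -> (\sum_i c i <= n)%N.
Proof.
move=> hx /hF [f [p [fF [[c' ->] e]]]]; have := hx f (fun i => c' i + c i)%N fF.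
by rewrite -coneD addrA -e subrK big_split /= => /(_ erefl); lia.
Qed.

Lemma not_calW_step x : W x -> ~ scrW u W x -> ~ calW u W x ->
  exists c, [/\ (0 < \sum_i c i)%N, W (x - cone u c) & ~ scrW u W (x - cone u c)].
Proof.
move=> Wx nsx ncx.
have [p [[c ->] [[Wxp nsxp] xp_neq]]] : exists p, inP u p /\
    (W (x - p) /\ ~ scrW u W (x - p)) /\ x - p <> x.
  apply: NNPP => no_p; apply: ncx; split=> // p Pp Wxp.
  by apply: NNPP => xp_neq; apply: no_p; exists p.
exists c; split=> //; rewrite lt0n; apply: contra_notN xp_neq.
rewrite sum_nat_eq0 => /forall_inP c0; rewrite big1 ?subr0 // => i _.
by rewrite (eqP (c0 i isT)) mulr0n.
Qed.

Lemma descend_to_calW x : W x -> ~ scrW u W x -> exists a, calW u W a /\ inP u (x - a).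
Proof.
have [n hn] := ex_height_le x; elim/ltn_ind: n x hn => n IHn x hn Wx nsx.
case: (classic (calW u W x)) => [cx | ncx].
  by exists x; rewrite subrr; split=> //; apply: inP0.
have [c [c_gt0 Wxc nsxc]] := not_calW_step Wx nsx ncx.
have [|a [ca Pa]] := IHn (n - \sum_i c i)%N _ _ (height_le_sub (c := c) hn) Wxc nsxc.
  by have := height_le_W hn Wxc; lia.
exists a; split=> //; have -> : x - a = (x - cone u c - a) + cone u c by vec_ring.
by apply: inPD => //; exists c.
Qed.

Lemma congr_calW_or_scrW1 w : W w ->
  exists2 w', calW u W w' \/ scrW1 u W w' & congrL u w w'.
Proof.
move=> Ww; case: (classic (scrW u W w)) => [sw | nsw].
  case: (classic (exists2 a, calW u W a & congrL u w a)) => [[a ca wa] | no_a].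
    by exists a => //; left.
  exists w; last by rewrite /congrL subrr; apply: inL0.
  by right; split=> // a ca wa; apply: no_a; exists a.
have [a [ca Pa]] := descend_to_calW Ww nsw.
by exists a; [left | apply: inP_inL].
Qed.

Lemma scrW_of_congr_scrW1 w1 w : scrW1 u W w1 -> W w -> congrL u w w1 -> scrW u W w.
Proof.
move=> [_ not_calW] Ww ww1; apply: NNPP => nsw.
have [a [ca Pa]] := descend_to_calW Ww nsw; apply: (not_calW a ca); rewrite /congrL.
have -> : w1 - a = - (w - w1) + (w - a) by vec_ring.
by apply: inLD; [apply: inLN | apply: inP_inL].
Qed.

End Descent.

Lemma ex_separating_dilate d (u : 'I_d -> vec d) (s : seq (vec d)) k : Zindep u ->
  exists N, (k < N)%N /\
    forall a b, a \in s -> b \in s -> inL (dilate u N) (a - b) -> a = b.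
Proof.
move=> hu; have [n Hn] : exists n, forall ab, ab \in [seq (a, b) | a <- s, b <- s] ->
    forall m, (n <= m)%N -> inL (dilate u m) (ab.1 - ab.2) -> ab.1 = ab.2.
  apply: ex_bound_seq => -[a b] _ /=.
  case: (classic (inL u (a - b))) => [[c ec] | nL]; last by exists 0%N => m _ /inL_dilate.
  exists (\sum_i absz (c i)).+1 => m le; rewrite ec => /(inL_dilate_small hu) c0.
  apply/eqP; rewrite -subr_eq0 ec -/(lin u c) (@eq_lin _ u c (fun=> 0)) ?lin0 // => i.
  apply: c0 => j.
  by apply: leq_trans le; rewrite ltnS (bigD1 j) //= leq_addr.
exists (maxn n k.+1); split; first by rewrite leq_max leqnn orbT.
by move=> a b ha hb; apply: (Hn (a, b) (allpairs_f pair ha hb)); rewrite leq_maxl.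
Qed.

Definition uncovered d (M W : vec d -> Prop) z := forall m w, M m -> W w -> z <> m + w.

Lemma not_complement_uncovered d (M W : vec d -> Prop) :
  ~ is_complement M W -> exists z, uncovered M W z.
Proof.
move=> not_comp; apply: NNPP => all_covered; apply: not_comp.
have cover z : exists m w, M m /\ W w /\ z = m + w.
  apply: NNPP => not_cover; apply: all_covered; exists z => m w Mm Ww ez.
  by apply: not_cover; exists m, w.
by split=> //; have [m [w [Mm _]]] := cover 0; exists m.
Qed.

Section MinimalComplement.
Variables (d : nat) (u : 'I_d -> vec d) (W : vec d -> Prop).
Variables (F s0 Ms : seq (vec d)) (N : nat).
Hypotheses (hu : Zindep u) (hd : (0 < d)%N).
Hypothesis hF : forall x, W x -> exists f p, f \in F /\ inP u p /\ x = f + p.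
Hypothesis hs0 : forall x, scrW u W x -> x \in s0.
Hypothesis hN : (size s0 < N)%N.
Hypothesis hsep : forall a b, a \in s0 -> b \in s0 -> inL (dilate u N) (a - b) -> a = b.
Hypothesis h2 : forall z, exists m w, m \in Ms /\ (calW u W w \/ scrW1 u W w) /\
  congrL u z (m + w).
Hypothesis h3 : forall m, m \in Ms -> exists w, scrW1 u W w /\
  forall m' w', m' \in Ms -> m' != m -> (calW u W w' \/ scrW1 u W w') ->
    ~ congrL u (m + w) (m' + w').

Local Notation NL := (inL (dilate u N)).

Definition coset_index := (seq_sub Ms * {ffun 'I_d -> 'I_N})%type.

Definition coset_rep (j : coset_index) : vec d :=
  ssval j.1 + lin u (fun i => (j.2 i : nat)%:Z).

Definition union_cosets (B : {set coset_index}) x := exists2 j, j \in B & NL (x - coset_rep j).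

Lemma N_gt0 : (0 < N)%N. Proof. exact: leq_ltn_trans (leq0n _) hN. Qed.

Lemma congr_coset_rep j : congrL u (coset_rep j) (ssval j.1).
Proof. by rewrite /congrL /coset_rep addrC addKr; apply: inL_lin. Qed.

Lemma union_cosetsD1 (B : {set coset_index}) j j0 x :
  j0 \in B -> j0 != j -> NL (x - coset_rep j0) -> union_cosets (B :\ j) x.
Proof. by move=> j0B neq Lx; exists j0; rewrite // in_setD1 neq. Qed.

Lemma complement_setT : is_complement (union_cosets setT) W.
Proof.
have cover z : exists x w, union_cosets setT x /\ W w /\ z = x + w.
  have [m [w [mMs [w_base [c ec]]]]] := h2 z.
  have mod_lt i : (absz (c i %% N%:Z)%Z < N)%N.
    by have := ltz_pmod (c i) (ltac:(rewrite ltz_nat; exact: N_gt0) : 0 < N%:Z); lia.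
  pose j : coset_index := (SeqSub mMs, [ffun i => Ordinal (mod_lt i)]).
  exists (z - w), w; split; last by split; [case: w_base => [[[]]|[[]]] | rewrite subrK].
  exists j; rewrite ?inE //.
  exists (fun i => (c i %/ N%:Z)%Z); rewrite lin_dilate.
  have -> : z - w - coset_rep j = (z - (m + w)) - lin u (fun i => (j.2 i : nat)%:Z) by vec_ring.
  rewrite ec -/(lin u c) linN linD; apply: eq_lin => i; rewrite ffunE /= gez0_abs.
    by rewrite {1}(divz_eq (c i) N%:Z) addrK mulrC.
  by apply: modz_ge0; rewrite eqz_nat -lt0n N_gt0.
by split=> //; have [x [w [Bx _]]] := cover 0; exists x.
Qed.

Lemma class_of_uncovered B j z x w j0 :
  uncovered (union_cosets (B :\ j)) W z ->
  j0 \in B -> NL (x - coset_rep j0) -> W w -> z = x + w -> j0 = j.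
Proof.
move=> unc j0B Lx Ww ez; apply: NNPP => /eqP neq.
exact: unc (union_cosetsD1 j0B neq Lx) Ww ez.
Qed.

Lemma cover_label_shift j wm j' x w v :
  (forall m' w', m' \in Ms -> m' != ssval j.1 -> (calW u W w' \/ scrW1 u W w') ->
    ~ congrL u (ssval j.1 + wm) (m' + w')) ->
  inL u v -> NL (x - coset_rep j') -> W w -> coset_rep j + wm + v = x + w ->
  j'.1 = j.1.
Proof.
move=> sep_wm Lv Lx Ww exw; apply: val_inj; apply: NNPP => /eqP neq.
have [w' w'_base ww'] := congr_calW_or_scrW1 hu hF Ww.
apply: (sep_wm _ w' (ssvalP j'.1) neq w'_base); rewrite /congrL.
have -> : ssval j.1 + wm - (ssval j'.1 + w') =
    - (coset_rep j - ssval j.1) - v + (x - coset_rep j') +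
    (coset_rep j' - ssval j'.1) + (w - w').
  by rewrite (canRL (addrK w) (esym exw)); vec_ring.
apply: inLD => //; apply: inLD; last exact: congr_coset_rep.
by apply: inLD; [apply: inLB; [apply/inLN/congr_coset_rep | ] | apply: inL_dilate Lx].
Qed.

Lemma class_duplicated B j : is_complement (union_cosets B) W -> j \in B ->
  exists2 j', j' \in B & (j' != j) && (j'.1 == j.1).
Proof.
move=> [_ covB] jB; apply: NNPP => no_dup.
have [wm [scr1_wm sep_wm]] := h3 (ssvalP j.1).
pose i0 : 'I_d := Ordinal hd.
(* Otherwise the points coset_rep j + wm + k u_i0, k < N, are all covered through
   coset j itself, by N elements of s0 that are pairwise incongruent modulo N L. *)
suff : (N <= size s0)%N by rewrite leqNgt hN.
apply: (pigeonhole_seq (P := fun (k : 'I_N) w => NL (w - wm - u i0 *+ k))).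
  move=> k; have [x [w [[j' j'B Lx] [Ww exw]]]] := covB (coset_rep j + wm + u i0 *+ k).
  have same := cover_label_shift sep_wm (inL_mulrn u i0 k) Lx Ww exw.
  have j'j : j' = j.
    by apply: NNPP => /eqP neq; apply: no_dup; exists j'; rewrite // neq same eqxx.
  subst j'.
  have Lw : NL (w - wm - u i0 *+ k).
    rewrite (_ : _ - _ = - (x - coset_rep j)); first exact: inLN.
    by rewrite (canRL (addrK w) (esym exw)); vec_ring.
  exists w => //; apply/hs0/(scrW_of_congr_scrW1 hu hF scr1_wm Ww); rewrite /congrL.
  rewrite -(subrK (u i0 *+ k) (w - wm)).
  by apply: inLD; [apply: inL_dilate Lw | apply: inL_mulrn].
move=> k k' w Lk Lk'; apply: val_inj.
apply: (inL_dilate_mulrn_eq hu (i := i0) (ltn_ord k) (ltn_ord k')).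
by rewrite (_ : _ - _ = (w - wm - u i0 *+ k') - (w - wm - u i0 *+ k)); [apply: inLB | vec_ring].
Qed.

Lemma uncovered_congr_scrW B j z x0 w0 :
  is_complement (union_cosets B) W -> j \in B ->
  uncovered (union_cosets (B :\ j)) W z ->
  NL (x0 - coset_rep j) -> W w0 -> z = x0 + w0 ->
  forall a, W a -> congrL u a w0 -> scrW u W a.
Proof.
move=> compB jB unc Lx0 Ww0 ez a Wa aw0; apply: NNPP => nsa.
have [j' j'B /andP[neq /eqP same]] := class_duplicated compB jB.
have Lz : inL u (z - coset_rep j' - a).
  have -> : z - coset_rep j' - a = (x0 - coset_rep j) +
      ((coset_rep j - ssval j.1) - (coset_rep j' - ssval j'.1)) - (a - w0).
    by rewrite ez same; vec_ring.
  apply: inLB => //; apply: inLD; first exact: inL_dilate Lx0.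
  by apply: inLB; apply: congr_coset_rep.
have [q Lq Pq] := inL_dilate_cone N_gt0 Lz.
apply: (unc (coset_rep j' + q) (a + (z - coset_rep j' - a - q))).
- by apply: (union_cosetsD1 j'B neq); rewrite addrC addKr.
- exact: W_addP Wa nsa Pq.
- by vec_ring.
Qed.

Lemma minimal_union_cosets B : is_complement (union_cosets B) W ->
  (forall j, j \in B -> ~ is_complement (union_cosets (B :\ j)) W) ->
  is_minimal_complement (union_cosets B) W.
Proof.
move=> compB minB; split=> // M' subM' [x [[j jB Lx] not_M'x]] [_ covM'].
have [z unc] := not_complement_uncovered (minB j jB).
have [x0 [w0 [[j0 j0B Lx0] [Ww0 ez]]]] := compB.2 z.
have j0j := class_of_uncovered unc j0B Lx0 Ww0 ez; subst j0.
have scr_w0 := uncovered_congr_scrW compB jB unc Lx0 Ww0 ez.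
have [x' [w' [M'x' [Ww' exw]]]] := covM' (x + w0).
have [j' j'B Lx'] := subM' _ M'x'.
have j'j : j' = j.
  apply: (class_of_uncovered unc j'B _ Ww' (x := x' + (x0 - x))).
    rewrite (_ : _ - _ = (x' - coset_rep j') + ((x0 - coset_rep j) - (x - coset_rep j))).
      by apply: inLD => //; apply: inLB.
    by vec_ring.
  by rewrite ez (canRL (addrK w0) exw); vec_ring.
subst j'.
have Lw : NL (w' - w0).
  rewrite (_ : _ - _ = (x - coset_rep j) - (x' - coset_rep j)); first exact: inLB.
  by rewrite (canRL (addrK w0) exw); vec_ring.
have ew : w' = w0.
  apply: (hsep _ _ Lw); apply/hs0/scr_w0 => //; first exact: inL_dilate Lw.
  by rewrite /congrL subrr; apply: inL0.
apply: not_M'x; suff -> : x = x' by [].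
by apply: (addIr w0); rewrite exw ew.
Qed.

Lemma ex_minimal_complement : exists M, is_minimal_complement M W.
Proof.
have [B compB minB] :=
  ex_minimal_set (p := fun B => is_complement (union_cosets B) W) complement_setT.
by exists (union_cosets B); apply: minimal_union_cosets.
Qed.

End MinimalComplement.

Unset Implicit Arguments.

Theorem theorem4p12 (d : nat) (u : 'I_d -> vec d) (W : vec d -> Prop)
  (hd : (1 <= d)%N) (hu : Zindep u) (hW : eventually_periodic u W)
  (hW1 : exists w, scrW1 u W w)
  (Ms : seq (vec d)) (hMne : Ms != [::])
  (h1 : forall m m', m \in Ms -> m' \in Ms -> congrL u m m' -> m = m')
  (h2 : forall z, exists m w, m \in Ms /\ (calW u W w \/ scrW1 u W w) /\
          congrL u z (m + w))
  (h3 : forall m, m \in Ms -> exists w, scrW1 u W w /\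
          forall m' w', m' \in Ms -> m' != m -> (calW u W w' \/ scrW1 u W w') ->
            ~ congrL u (m + w) (m' + w')) :
  exists M : vec d -> Prop, is_minimal_complement M W.
Proof.
have [_ [[F [_ hF]] [s0 hs0]]] := hW.
have [N [hN hsep]] := ex_separating_dilate s0 (size s0) hu.
exact: ex_minimal_complement hu hd hF hs0 hN hsep h2 h3.
Qed.
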